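(* For every $\varepsilon>0$ there exists $n_0$ such that every graph $G$ on $n\ge n_0$ vertices that contains no clique of size $\frac12\log_2 n$ satisfies $\chi_\ell(G)\le(2+\varepsilon)\,n/\log_2 n$. Equivalently, $R_{\chi_\ell}(k,\underline{k})\le 2^{(2+o(1))k}$ as $k\to\infty$.
   Context: $\chi_\ell(G)$ is the list chromatic number: the least $k$ such that for every assignment of lists $L(v)\subset\mathbb Z^+$ with $|L(v)|=k$ there is a proper colouring $c$ with $c(v)\in L(v)$ for all $v$. For positive integers $k,\ell$, the list chromatic Ramsey number $R_{\chi_\ell}(k,\underline{\ell})$ is the least $n$ such that every $K_k$-free graph $G$ on $n$ vertices satisfies $\chi_\ell(G)<n/\ell$. *)

From Stdlib Require Import Reals.
From mathcomp Require Import all_boot.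
Set Implicit Arguments. Unset Strict Implicit. Unset Printing Implicit Defensive.

Definition simple_graph (n : nat) (e : rel 'I_n) : Prop :=
  (forall u v, e u v = e v u) /\ (forall v, e v v = false).

Definition is_clique (n : nat) (e : rel 'I_n) (S : {set 'I_n}) : Prop :=
  forall u v, u \in S -> v \in S -> u != v -> e u v.

Definition k_list_assignment (n k : nat) (L : 'I_n -> seq nat) : Prop :=
  forall v, [/\ uniq (L v), size (L v) = k & all (fun c => 0 < c) (L v)].

Definition choosable (n : nat) (e : rel 'I_n) (k : nat) : Prop :=
  forall L : 'I_n -> seq nat, k_list_assignment k L ->
    exists c : 'I_n -> nat,
      (forall v, c v \in L v) /\ (forall u v, e u v -> c u != c v).

Definition is_list_chromatic_number (n : nat) (e : rel 'I_n) (k : nat) : Prop :=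
  choosable e k /\ (forall j, (j < k)%N -> ~ choosable e j).

Definition log2 (x : R) : R := Rdiv (ln x) (ln (INR 2)).

From Stdlib Require Import Reals Lra Classical.
From mathcomp Require Import all_boot zify.
Set Implicit Arguments. Unset Strict Implicit. Unset Printing Implicit Defensive.

(* Let l = floor(log2 n), a = floor(l/2) + 1 and b = (1/2 - O(eps)) l.  As G has no clique of
   size a, the Erdos-Szekeres bound yields an independent set of size b in every set of 2^(a+b)
   vertices.  Given lists of size n/b + 2^(a+b), colour greedily: while some colour lies in the
   lists of at least 2^(a+b) uncoloured vertices, give it to an independent b-set among them and
   discard it.  This happens at most n/b times, so afterwards every uncoloured vertex keeps
   2^(a+b) unused colours, each lying in fewer than 2^(a+b) of these lists, and Hall's theorem
   colours the rest with distinct colours.  For p > 4/eps the parameters can be chosen with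
   2^(a+b) <= n / (p (l+1)) and b >= p (l+1) / (2p+3), so the lists have size at most
   (2 + 4/p) n / (l+1) < (2 + eps) n / log2 n. *)

Section HallTheorem.
Variables (T U : finType) (u0 : U).
Implicit Types (R : T -> {set U}) (S W : {set T}) (A : {set U}).

Definition neighbours R S := \bigcup_(v in S) R v.

Definition hall_condition R W := forall S, S \subset W -> #|S| <= #|neighbours R S|.

Definition matching R W (f : T -> U) := {in W, forall v, f v \in R v} /\ {in W &, injective f}.

Lemma sub_neighbours R S v : v \in S -> R v \subset neighbours R S.
Proof. by move=> vS; apply: (bigcup_sup v). Qed.

Lemma matching_glue R W S A f1 f2 : S \subset W ->
  matching R S f1 -> {in S, forall v, f1 v \in A} ->
  matching (fun v => R v :\: A) (W :\: S) f2 ->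
  matching R W (fun v => if v \in S then f1 v else f2 v).
Proof.
move=> sSW [f1R f1i] f1A [f2R f2i].
have f2RD v : v \in W -> v \notin S -> f2 v \in R v :\: A.
  by move=> vW vS; apply: f2R; rewrite inE vS.
split=> [v vW | u v uW vW] /=.
  case: ifP => vS; first exact: f1R.
  by move: (f2RD v vW (negbT vS)); rewrite inE => /andP[].
case: ifP => uS; case: ifP => vS.
- exact: f1i.
- by move=> E; move: (f1A u uS) (f2RD v vW (negbT vS)); rewrite E !inE => ->.
- by move=> E; move: (f1A v vS) (f2RD u uW (negbT uS)); rewrite E !inE => ->.
- by apply: f2i; rewrite inE ?uS ?vS.
Qed.

Lemma hall_condition_tight R W S : hall_condition R W -> S \subset W ->
  #|neighbours R S| <= #|S| ->
  hall_condition (fun v => R v :\: neighbours R S) (W :\: S).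
Proof.
move=> hallW sSW tightS S' sS'.
have disSS' : [disjoint S & S'].
  rewrite -setI_eq0 -subset0; apply/subsetP=> v.
  by rewrite !inE => /andP[vS /(subsetP sS')]; rewrite inE vS.
have sN : neighbours R (S :|: S') \subset
          neighbours R S :|: neighbours (fun v => R v :\: neighbours R S) S'.
  apply/subsetP=> x /bigcupP[v]; rewrite !inE => /orP[vS | vS'] xR.
    by rewrite (subsetP (sub_neighbours R vS)).
  case: (boolP (x \in neighbours R S)) => //= xN.
  by apply/bigcupP; exists v; rewrite // inE xN.
have := hallW (S :|: S'); rewrite subUset sSW (subset_trans sS' (subsetDl _ _)).
have := leq_trans (subset_leq_card sN) (leq_card_setU _ _).1.
by rewrite (cardsU S S') (disjoint_setI0 disSS') cards0; lia.
Qed.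

Lemma hall_condition_slack R W v x : v \in W ->
  (forall S, S \proper W -> S != set0 -> #|S| < #|neighbours R S|) ->
  hall_condition (fun w => R w :\ x) (W :\ v).
Proof.
move=> vW slackW S sS.
have [-> | S0] := eqVneq S set0; first by rewrite cards0.
have pSW : S \proper W.
  apply/properP; split; first exact: subset_trans sS (subsetDl _ _).
  by exists v => //; apply/negP => /(subsetP sS); rewrite !inE eqxx.
have sN : neighbours R S \subset x |: neighbours (fun w => R w :\ x) S.
  apply/subsetP=> y /bigcupP[w wS yR]; rewrite !inE.
  by case: eqP => //= /eqP yx; apply/bigcupP; exists w; rewrite // !inE yx.
have := leq_trans (subset_leq_card sN) (leq_card_setU _ _).1.
by rewrite cards1; have := slackW S pSW S0; lia.
Qed.

Theorem hall_matching R W : hall_condition R W -> exists f, matching R W f.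
Proof.
have [s] := ubnP #|W|; elim: s R W => // s IH R W ltWs hallW.
case: (boolP [exists S : {set T}, [&& S \proper W, S != set0 & #|neighbours R S| <= #|S|]])
    => [/existsP[S /and3P[pSW S0 tightS]] |].
  have sSW := proper_sub pSW.
  have [f1 mf1] : exists f, matching R S f.
    apply: IH; first by have := proper_card pSW; lia.
    by move=> S' sS'; apply: hallW; apply: subset_trans sSW.
  have [f2 mf2] : exists f, matching (fun v => R v :\: neighbours R S) (W :\: S) f.
    apply: IH; last exact: hall_condition_tight.
    by rewrite cardsDS //; move: (card_gt0 S) (proper_card pSW); rewrite S0; lia.
  exists (fun v => if v \in S then f1 v else f2 v).
  by apply: matching_glue mf2 => // v vS; apply: subsetP (sub_neighbours R vS) _ (mf1.1 v vS).
rewrite negb_exists => /forallP slackW.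
have [W0 | [v vW]] := set_0Vmem W.
  by exists (fun=> u0); split=> [w | w1 w2]; rewrite W0 inE.
have [x xR] : exists x, x \in R v.
  apply/set0Pn; rewrite -card_gt0; have := hallW [set v].
  by rewrite sub1set vW cards1 /neighbours big_set1 => /(_ isT).
have [f2 mf2] : exists f, matching (fun w => R w :\ x) (W :\ v) f.
  apply: IH; first by have := cardsD1 v W; rewrite vW; lia.
  apply: hall_condition_slack => // S pSW S0; rewrite ltnNge.
  by apply: contraNN (slackW S) => tightS; rewrite pSW S0.
exists (fun w => if w \in [set v] then x else f2 w); apply: matching_glue mf2.
- by rewrite sub1set.
- by split=> [w | w1 w2]; rewrite !inE => /eqP-> //; move=> /eqP->.
- by move=> w _; rewrite inE.
Qed.

(* Double counting: each v in S sends at least m edges into neighbours R S,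
   and each vertex of neighbours R S receives at most m of them. *)
Lemma hall_condition_degree R W m : 0 < m -> {in W, forall v, m <= #|R v|} ->
  (forall x, #|[set v in W | x \in R v]| <= m) -> hall_condition R W.
Proof.
move=> m_gt0 degW degU S sSW; rewrite -(leq_pmul2r m_gt0).
have edges : \sum_(v in S) #|R v| = \sum_(x in neighbours R S) #|[set v in S | x \in R v]|.
  under eq_bigr do rewrite -sum1_card.
  rewrite (exchange_big_dep (mem (neighbours R S))) /= => [|v x vS]; last first.
    exact: subsetP (sub_neighbours R vS) x.
  by apply: eq_bigr => x _; rewrite -sum1_card; apply: eq_bigl => v; rewrite inE.
apply: leq_trans (_ : \sum_(v in S) #|R v| <= _).
  by rewrite -sum_nat_const; apply: leq_sum => v vS; apply: degW (subsetP sSW v vS).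
rewrite edges -sum_nat_const; apply: leq_sum => x _; apply: leq_trans (degU x).
by apply: subset_leq_card; apply/subsetP => v; rewrite !inE => /andP[/(subsetP sSW)-> ->].
Qed.

End HallTheorem.

Definition independent (T : finType) (e : rel T) (I : {set T}) :=
  {in I &, forall u v, u != v -> ~~ e u v}.

Section GreedyListColouring.
Variables (T C : finType) (c0 : C) (e : rel T) (L : T -> {set C}) (m t : nat).
Hypotheses (e_irr : irreflexive e) (m_gt0 : 0 < m) (t_gt0 : 0 < t).
Hypothesis large_lists : forall v, #|T| %/ t + m <= #|L v|.
Hypothesis independent_in_large : forall U : {set T}, m <= #|U| ->
  exists2 I : {set T}, I \subset U & independent e I /\ t <= #|I|.

Definition colours_avoiding (D : {set C}) (W : {set T}) (c : T -> C) :=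
  {in W, forall v, c v \in L v :\: D} /\ {in W &, forall u v, e u v -> c u != c v}.

Lemma large_lists_avoiding (D : {set C}) v : #|D| <= #|T| %/ t -> m <= #|L v :\: D|.
Proof.
move=> leD; rewrite cardsD; have := large_lists v.
by have := subset_leq_card (subsetIr (L v) D); lia.
Qed.

Lemma colours_avoiding_hall (D : {set C}) (W : {set T}) : #|D| <= #|T| %/ t ->
  (forall x, x \notin D -> #|[set v in W | x \in L v]| < m) ->
  exists c, colours_avoiding D W c.
Proof.
move=> leD rare.
have [c [cL c_inj]] : exists c, matching (fun v => L v :\: D) W c.
  apply: (hall_matching c0); apply: (hall_condition_degree m_gt0) => [v _ | x].
    exact: large_lists_avoiding.
  have [xD | /rare/ltnW] := boolP (x \in D); last first.
    apply: leq_trans; apply: subset_leq_card.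
    by apply/subsetP => v; rewrite !inE => /andP[-> /andP[_ ->]].
  rewrite (_ : [set _ in _ | _] = set0) ?cards0 //.
  by apply/setP => v; rewrite !inE xD andbF.
exists c; split=> // u v uW vW euv; apply: contraTneq euv => /c_inj eq_uv.
by rewrite (eq_uv uW vW) e_irr.
Qed.

Lemma colours_avoiding_extend (D : {set C}) (W I : {set T}) x c :
  I \subset W -> independent e I ->
  {in I, forall v, x \in L v :\: D} -> colours_avoiding (x |: D) (W :\: I) c ->
  colours_avoiding D W (fun v => if v \in I then x else c v).
Proof.
move=> sIW indI xL [cL c_proper].
have cLD v : v \in W -> v \notin I -> c v \in L v :\: D /\ c v != x.
  move=> vW vI; move: (cL v); rewrite !inE vI vW => /(_ isT) /andP[/norP[cx cD] cLv].
  by rewrite cD cLv.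
split=> [v vW | u v uW vW euv] /=.
  by case: ifPn => vI; [exact: xL | case: (cLD v vW vI)].
case: ifPn => uI; case: ifPn => vI.
- by apply: contraTneq euv => _; have [-> //|] := eqVneq u v; [rewrite e_irr | exact: indI].
- by have [_] := cLD v vW vI; rewrite eq_sym.
- by case: (cLD u uW uI).
- by apply: c_proper; rewrite // inE ?uI ?vI.
Qed.

Lemma greedy_colours_avoiding (D : {set C}) (W : {set T}) :
  #|D| * t + #|W| <= #|T| -> exists c, colours_avoiding D W c.
Proof.
have [s] := ubnP #|W|; elim: s D W => // s IH D W ltWs budget.
case: (boolP [exists x, (x \notin D) && (m <= #|[set v in W | x \in L v]|)]) => [|].
  case/existsP => x /andP[xD /independent_in_large[I sI [indI leI]]].
  have sIW : I \subset W by apply: subset_trans sI _; apply/subsetP => v; rewrite inE => /andP[].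
  have [c colc] : exists c, colours_avoiding (x |: D) (W :\: I) c.
    apply: IH; rewrite cardsDS // ?cardsU1 ?xD; have := subset_leq_card sIW; nia.
  exists (fun v => if v \in I then x else c v); apply: colours_avoiding_extend colc => // v vI.
  by move: (subsetP sI v vI); rewrite !inE xD => /andP[_ ->].
rewrite negb_exists => /forallP rare; apply: colours_avoiding_hall.
  by rewrite leq_divRL //; lia.
by move=> x xD; move: (rare x); rewrite xD ltnNge.
Qed.

Theorem greedy_list_colouring :
  exists c : T -> C, (forall v, c v \in L v) /\ (forall u v, e u v -> c u != c v).
Proof.
have [|c [cL c_proper]] := greedy_colours_avoiding (D := set0) (W := [set: T]).
  by rewrite cards0 cardsT.
exists c; split=> [v | u v]; first by move: (cL v); rewrite !inE => /(_ isT) /andP[].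
by apply: c_proper; rewrite inE.
Qed.

End GreedyListColouring.

Section Ramsey.
Variables (n : nat) (e : rel 'I_n).
Hypothesis e_simple : simple_graph e.

Lemma clique_setU1 v S : is_clique e S -> {in S, forall u, e v u} -> is_clique e (v |: S).
Proof.
have [e_sym _] := e_simple; move=> cS adj x y; rewrite !inE.
case/predU1P => [-> | xS] /predU1P[-> | yS] neq_xy.
- by rewrite eqxx in neq_xy.
- exact: adj.
- by rewrite e_sym; apply: adj.
- exact: cS.
Qed.

Lemma independent_setU1 v I : independent e I -> {in I, forall u, ~~ e v u} ->
  independent e (v |: I).
Proof.
have [e_sym _] := e_simple; move=> iI nadj x y; rewrite !inE.
case/predU1P => [-> | xI] /predU1P[-> | yI] neq_xy.
- by rewrite eqxx in neq_xy.
- exact: nadj.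
- by rewrite e_sym; apply: nadj.
- exact: iI.
Qed.

Theorem ramsey_clique_or_independent a b (U : {set 'I_n}) : 2 ^ (a + b) <= #|U| ->
  (exists2 S : {set 'I_n}, S \subset U & is_clique e S /\ #|S| = a) \/
  (exists2 I : {set 'I_n}, I \subset U & independent e I /\ #|I| = b).
Proof.
elim: a b U => [|a IHa] b U.
  by left; exists set0; rewrite ?sub0set ?cards0 //; split=> // u v; rewrite inE.
elim: b U => [|b IHb] U.
  by right; exists set0; rewrite ?sub0set ?cards0 //; split=> // u v; rewrite inE.
move=> leU; have [v vU] : exists v, v \in U.
  by apply/card_gt0P; apply: leq_trans leU; rewrite expn_gt0.
pose N := [set u in U :\ v | e v u]; pose M := [set u in U :\ v | ~~ e v u].
have sNU : N \subset U by apply/subsetP => u; rewrite !inE => /andP[/andP[_ ->]].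
have sMU : M \subset U by apply/subsetP => u; rewrite !inE => /andP[/andP[_ ->]].
have vN : v \notin N by rewrite !inE eqxx.
have vM : v \notin M by rewrite !inE eqxx.
have cardNM : #|N| + #|M| = #|U| - 1.
  rewrite (cardsD1 v U) vU -(cardsID [set u | e v u] (U :\ v)) add1n subn1 /=.
  by congr (_ + _); apply: eq_card => u; rewrite !inE andbC.
have [leN | ltN] := leqP (2 ^ (a + b.+1)) #|N|.
  case: (IHa _ _ leN) => [[S sSN [cS <-]] | [I sIN iI]]; last first.
    by right; exists I => //; apply: subset_trans sNU.
  left; exists (v |: S); last split.
  - by rewrite subUset sub1set vU (subset_trans sSN sNU).
  - by apply: clique_setU1 => // u /(subsetP sSN); rewrite inE => /andP[].
  - by rewrite cardsU1 (contra (subsetP sSN v) vN).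
have leM : 2 ^ (a.+1 + b) <= #|M|.
  by move: leU ltN; rewrite addSn addnS !expnS; lia.
case: (IHb _ leM) => [[S sSM cS] | [I sIM [iI <-]]].
  by left; exists S => //; apply: subset_trans sMU.
right; exists (v |: I); last split.
- by rewrite subUset sub1set vU (subset_trans sIM sMU).
- by apply: independent_setU1 => // u /(subsetP sIM); rewrite inE => /andP[].
- by rewrite cardsU1 (contra (subsetP sIM v) vM).
Qed.

End Ramsey.

Lemma lin_lt_exp2 d y : d * y.+1 < 2 ^ (d + y).
Proof.
rewrite expnD; apply: leq_trans (_ : 2 ^ d * y.+1 <= _).
  by rewrite ltn_pmul2r // ltn_expl.
by rewrite leq_pmul2l ?expn_gt0 // ltn_expl.
Qed.

(* With q = 2p + 3, h = l/2 and y = h/q, take a = h + 1 and b = h - (2pq + y + 1): then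
   j = l - a - b >= 2pq + y, so 2^j > 2pq (y + 1) >= p (l + 1) by lin_lt_exp2, while b falls
   short of h by only about h/q. *)
Definition param_threshold p := (2*p+3) * (2*p*(2*p+3)).+1 + 2*p + 1.

Lemma parameters_exist p l : param_threshold p <= l ->
  exists a b j, [/\ l < a.*2, a + b + j = l, p * l.+1 < 2 ^ j & p * l.+1 <= (2*p+3) * b].
Proof.
rewrite /param_threshold; set q := 2*p+3; set D := 2*p*q => le_l.
set h := l./2; set y := h %/ q.
have l_split : l = h.*2 + odd l by rewrite /h -{1}(odd_double_half l) addnC.
have {l_split} /andP[le_hl le_lh] : h.*2 <= l <= h.*2.+1.
  by move: l_split (leq_b1 (odd l)); lia.
have qy_le : q * y <= h by rewrite mulnC leq_divM.
have y_le : 3 * y <= h by apply: leq_trans qy_le; rewrite leq_mul2r /q; lia.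
have le_qD : 3 * D.+1 <= q * D.+1 by rewrite leq_mul2r /q; lia.
have le_Dy : (D + y).+1 <= h by lia.
exists h.+1, (h - (D + y).+1), (l - h.+1 - (h - (D + y).+1)); split.
- by rewrite doubleS; lia.
- by lia.
- apply: (@leq_ltn_trans (D * y.+1)); last first.
    by apply: leq_trans (lin_lt_exp2 D y) _; rewrite leq_exp2l //; lia.
  have h_lt : h < y.+1 * q by apply: ltn_ceil; rewrite /q; lia.
  apply: leq_trans (_ : p * (h.+1).*2 <= _); first by rewrite leq_mul2l; lia.
  by rewrite /D -mul2n mulnCA -!mulnA leq_mul2l (mulnC q) leq_mul2l h_lt !orbT.
- have qb : q * (h - (D + y).+1) + (q + (q * D + q * y)) = q * h.
    by rewrite -mulnDr -mulnS -mulnDr subnK.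
  have qh : q * h = 2 * (p * h) + 3 * h by rewrite /q mulnDl -mulnA.
  have pl : p * l.+1 <= 2 * (p * h) + 2 * p.
    by rewrite mulnCA [2 * p]mulnC -mulnDr leq_mul2l; lia.
  by move: qb qh pl le_l qy_le; rewrite mulnS; lia.
Qed.

Lemma list_size_bound p n l a b j : 2 ^ l <= n -> a + b + j = l ->
  p * l.+1 < 2 ^ j -> p * l.+1 <= (2*p+3) * b ->
  p * (n %/ b + 2 ^ (a + b)) * l.+1 <= (2*p+4) * n.
Proof.
move=> le_n split_l lt_j le_b.
have greedy_part : n %/ b * (p * l.+1) <= (2*p+3) * n.
  apply: leq_trans (leq_mul (leqnn _) le_b) _.
  by rewrite mulnCA leq_mul2l leq_divM orbT.
have hall_part : 2 ^ (a + b) * (p * l.+1) <= n.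
  apply: leq_trans (leq_mul (leqnn _) (ltnW lt_j)) _.
  by rewrite -expnD split_l.
by move: greedy_part hall_part; rewrite mulnDr !mulnDl; nia.
Qed.

Section Log2.
Local Open Scope R_scope.

Lemma INR_expn m k : INR (m ^ k)%N = INR m ^ k.
Proof. by elim: k => [|k IH] //; rewrite expnS mult_INR IH. Qed.

Lemma INR_2 : INR 2 = 2.
Proof. by rewrite /=; lra. Qed.

Lemma ln2_gt0 : 0 < ln (INR 2).
Proof. by rewrite INR_2; have := ln_lt_2; lra. Qed.

Lemma log2_lt_nat n k : (0 < n)%N -> (n < 2 ^ k)%N -> log2 (INR n) < INR k.
Proof.
move=> /ltP/lt_0_INR n_gt0 /ltP/lt_INR; rewrite INR_expn => lt_nk.
have := ln_increasing _ _ n_gt0 lt_nk; rewrite ln_pow INR_2; last lra.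
move=> lt_ln; apply: (Rmult_lt_reg_r (ln (INR 2))); first exact: ln2_gt0.
by rewrite /log2 /Rdiv Rmult_assoc Rinv_l; [rewrite INR_2; lra | have := ln2_gt0; lra].
Qed.

Lemma log2_gt0 n : (1 < n)%N -> 0 < log2 (INR n).
Proof.
move=> /ltP/lt_INR lt_1n; apply: Rdiv_lt_0_compat; last exact: ln2_gt0.
by rewrite -ln_1; apply: ln_increasing; rewrite /= in lt_1n; lra.
Qed.

Lemma le_div_log2 (p K n l : nat) eps : 4 < INR p * eps ->
  (p * K * l.+1 <= (2 * p + 4) * n)%N -> 0 < log2 (INR n) < INR l.+1 ->
  INR K <= (INR 2 + eps) * INR n / log2 (INR n).
Proof.
move=> p_eps /leP/le_INR; rewrite !mult_INR plus_INR mult_INR S_INR /= => le_pK [log_gt0 log_lt].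
have p_gt0 : 0 < INR p.
  by case: (Rle_lt_or_eq_dec _ _ (pos_INR p)) => // p0; rewrite -p0 Rmult_0_l in p_eps; lra.
have K_ge0 := pos_INR K.
have n_ge0 := pos_INR n.
have le_Kl : INR K * log2 (INR n) <= INR K * (INR l + 1) by apply: Rmult_le_compat_l; lra.
have le_4n : 4 * INR n <= INR p * eps * INR n by nra.
have : INR p * (INR K * log2 (INR n)) <= INR p * ((2 + eps) * INR n) by nra.
move/(Rmult_le_reg_l _ _ _ p_gt0) => le_Klog.
apply: (Rmult_le_reg_r (log2 (INR n))) => //.
by rewrite /Rdiv Rmult_assoc Rinv_l; lra.
Qed.

End Log2.

Lemma card_ordinals_in_seq N (s : seq nat) : uniq s -> {in s, forall y, y < N} ->
  #|[set x : 'I_N | val x \in s]| = size s.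
Proof.
move=> s_uniq s_lt; rewrite cardE -(size_map val); apply/perm_size/uniq_perm => //.
  by rewrite map_inj_uniq ?enum_uniq //; apply: val_inj.
move=> y; apply/mapP/idP => [[x] | ys]; first by rewrite mem_enum inE => xs ->.
by exists (Ordinal (s_lt y ys)); rewrite ?mem_enum ?inE.
Qed.

Lemma choosable_of_independent_sets n (e : rel 'I_n) m t : simple_graph e -> 0 < m -> 0 < t ->
  (forall U : {set 'I_n}, m <= #|U| ->
     exists2 I : {set 'I_n}, I \subset U & independent e I /\ t <= #|I|) ->
  choosable e (n %/ t + m).
Proof.
move=> [_ e_irr] m_gt0 t_gt0 indep L L_lists.
pose N := (\max_v \max_(y <- L v) y).+1.
have L_lt v y : y \in L v -> y < N.
  by move=> yL; rewrite ltnS; apply: leq_trans (leq_bigmax_seq _ yL isT) (leq_bigmax v).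
have [|c [cL c_proper]] :=
  greedy_list_colouring (ord0 : 'I_N) (L := fun v => [set x | val x \in L v])
                        e_irr m_gt0 t_gt0 _ indep.
  move=> v; have [L_uniq L_size _] := L_lists v.
  by rewrite card_ord card_ordinals_in_seq ?L_size // => y; apply: L_lt.
exists (fun v => val (c v)); split=> [v | u v /c_proper]; first by move: (cL v); rewrite inE.
by rewrite val_eqE.
Qed.

Lemma list_chromatic_number_exists n (e : rel 'I_n) K : choosable e K ->
  exists2 k, k <= K & is_list_chromatic_number e k.
Proof.
elim/ltn_ind: K => K IH chK.
case: (classic (exists2 j, j < K & choosable e j)) => [[j ltjK chj] | none].
  have [k lekj chik] := IH j ltjK chj.
  by exists k => //; apply: leq_trans lekj (ltnW ltjK).
by exists K => //; split=> // j ltjK chj; apply: none; exists j.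
Qed.

Lemma independent_of_small_cliques n (e : rel 'I_n) a b : simple_graph e ->
  (forall S, is_clique e S -> #|S| < a) ->
  forall U : {set 'I_n}, 2 ^ (a + b) <= #|U| ->
    exists2 I : {set 'I_n}, I \subset U & independent e I /\ b <= #|I|.
Proof.
move=> e_simple small U leU.
case: (ramsey_clique_or_independent e_simple leU) => [[S _ [cS cardS]] | [I sIU [iI <-]]].
  by have := small S cS; rewrite cardS ltnn.
by exists I.
Qed.

Theorem mainTheorem18 :
  forall eps : R, Rlt 0 eps ->
  exists n0 : nat,
    forall (n : nat) (e : rel 'I_n),
      (n0 <= n)%N ->
      simple_graph e ->
      (forall S : {set 'I_n},
          is_clique e S -> Rlt (INR #|S|) (Rmult (Rinv (INR 2)) (log2 (INR n)))) ->
      exists k : nat,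
        is_list_chromatic_number e k /\
        Rle (INR k)
            (Rdiv (Rmult (Rplus (INR 2) eps) (INR n)) (log2 (INR n))).
Proof.
move=> eps eps_gt0; have [p p_eps] := INR_archimed eps 4 eps_gt0.
have p_gt0 : 0 < p by case: p p_eps => //=; lra.
exists (2 ^ param_threshold p) => n e le_n e_simple small_cliques.
have n_gt0 : 0 < n by apply: leq_trans le_n; rewrite expn_gt0.
set l := trunc_log 2 n.
have le_pl : param_threshold p <= l := trunc_log_max (p := 2) isT le_n.
have [a [b [j [lt_la split_l lt_j le_b]]]] := parameters_exist le_pl.
have log_lt : Rlt (log2 (INR n)) (INR l.+1) by apply: log2_lt_nat; last exact: trunc_log_ltn.
have log_gt0 : Rlt 0 (log2 (INR n)).
  apply: log2_gt0; apply: leq_trans le_n; rewrite /param_threshold -[1]/(2 ^ 0) ltn_exp2l; lia.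
have b_gt0 : 0 < b.
  by move: le_b; rewrite lt0n; apply: contraTneq => ->; rewrite muln0 -ltnNge muln_gt0 p_gt0.
have cliques_lt_a S : is_clique e S -> #|S| < a.
  move=> /small_cliques; rewrite INR_2 => lt_S; rewrite ltnNge; apply/negP => /leP/le_INR le_aS.
  by move: lt_la log_lt => /leP/le_INR; rewrite -addnn plus_INR !S_INR; lra.
have chK := choosable_of_independent_sets e_simple (expn_gt0 2 (a + b)) b_gt0
  (independent_of_small_cliques e_simple cliques_lt_a).
have [k le_kK chi_k] := list_chromatic_number_exists chK.
exists k; split => //; apply: Rle_trans (le_INR _ _ (leP le_kK)) _.
apply: (le_div_log2 (p := p) (l := l)) => //.
exact: list_size_bound (trunc_logP (p := 2) isT n_gt0) split_l lt_j le_b.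
Qed.
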